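(* Let $R$ be an integral domain such that every finitely generated ideal of $R$ is a multiplication ideal. Then $R$ is an avoidance ring.
   Context: All rings are commutative with $1\neq 0$. An ideal $I$ of $R$ is a multiplication ideal if every ideal of $R$ contained in $I$ is of the form $IJ$ for some ideal $J$ of $R$. An ideal $I$ has avoidance if whenever $I_1,\ldots,I_n$ are finitely many ideals of $R$ with $I\subseteq\bigcup_{k=1}^n I_k$, then $I\subseteq I_k$ for some $k$. A ring is an avoidance ring if every ideal of it has avoidance. *)

From HB Require Import structures.
From mathcomp Require Import all_boot all_algebra.
Set Implicit Arguments. Unset Strict Implicit. Unset Printing Implicit Defensive.
Import GRing.Theory.
Local Open Scope ring_scope.

Definition is_ideal (R : comNzRingType) (I : R -> Prop) : Prop :=
  [/\ I 0,
      (forall x y, I x -> I y -> I (x + y)) &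
      (forall r x, I x -> I (r * x))].

Definition ideal_mul (R : comNzRingType) (I J : R -> Prop) : R -> Prop :=
  fun x => exists (n : nat) (a b : 'I_n -> R),
    (forall i, I (a i) /\ J (b i)) /\ x = \sum_(i < n) a i * b i.

Definition fin_gen_ideal (R : comNzRingType) (I : R -> Prop) : Prop :=
  exists s : seq R, forall x,
    I x <-> exists c : 'I_(size s) -> R, x = \sum_(i < size s) c i * s`_i.

Definition mult_ideal (R : comNzRingType) (I : R -> Prop) : Prop :=
  forall K : R -> Prop, is_ideal K -> (forall x, K x -> I x) ->
    exists J : R -> Prop, is_ideal J /\ (forall x, K x <-> ideal_mul I J x).

Definition has_avoidance (R : comNzRingType) (I : R -> Prop) : Prop :=
  forall (n : nat) (Is : 'I_n -> R -> Prop),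
    (forall k, is_ideal (Is k)) ->
    (forall x, I x -> exists k, Is k x) ->
    exists k, forall x, I x -> Is k x.

Definition avoidance_ring (R : comNzRingType) : Prop :=
  forall I : R -> Prop, is_ideal I -> has_avoidance I.

From mathcomp Require Import all_boot all_algebra.
From mathcomp Require Import boolp classical_sets.
Set Implicit Arguments. Unset Strict Implicit. Unset Printing Implicit Defensive.
Import GRing.Theory.
Local Open Scope classical_set_scope.
Local Open Scope ring_scope.

(* Suppose an ideal I is covered by I_1, ..., I_n but lies in none of them, and pick y_k
   in I outside I_k. The ideal J generated by the y_k is a multiplication ideal, so it
   suffices that multiplication ideals of a domain have avoidance. Write I_k ∩ J = J L_k;
   then L_k is proper, so it lies in a maximal ideal M_k, and cancellation in the domain
   gives J ⊄ J M_k. A prime-avoidance argument for the submodules J M_k produces z in J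
   outside every J M_k ⊇ I_k ∩ J, contradicting the cover. *)

Lemma nsubsetP T (A B : set T) : ~ A `<=` B -> exists x, A x /\ ~ B x.
Proof. by move=> /existsNP [x /not_implyP]; exists x. Qed.

Section Ideals.
Variable R : comNzRingType.
Implicit Types (I J L M : set R) (a b r x y : R).

Lemma ideal_sum I n (F : 'I_n -> R) :
  is_ideal I -> (forall i, I (F i)) -> I (\sum_(i < n) F i).
Proof. by case=> I0 ID _ IF; apply: big_ind. Qed.

Lemma idealB I x y : is_ideal I -> I x -> I y -> I (x - y).
Proof. by case=> _ ID IM Ix Iy; apply: ID => //; rewrite -mulN1r; apply: IM. Qed.

Lemma mem_ideal_mul I J a b : I a -> J b -> ideal_mul I J (a * b).
Proof. by move=> Ia Jb; exists 1%N, (fun=> a), (fun=> b); rewrite big_ord1. Qed.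

Lemma ideal_mulSr I J L : J `<=` L -> ideal_mul I J `<=` ideal_mul I L.
Proof.
move=> JL x [n [a [b [Hab ->]]]]; exists n, a, b; split => // i.
by have [] := Hab i; split => //; apply: JL.
Qed.

Lemma is_ideal_mul I J : is_ideal I -> is_ideal (ideal_mul I J).
Proof.
case=> _ _ IM; split.
- by exists 0%N, (fun=> 0), (fun=> 0); rewrite big_ord0; split => // -[].
- move=> _ _ [n1 [a1 [b1 [H1 ->]]]] [n2 [a2 [b2 [H2 ->]]]].
  pose cat (c1 : 'I_n1 -> R) (c2 : 'I_n2 -> R) i :=
    match split i with inl j => c1 j | inr j => c2 j end.
  exists (n1 + n2)%N, (cat a1 a2), (cat b1 b2); split.
    by move=> i; rewrite /cat; case: (split i).
  by rewrite big_split_ord /cat; congr (_ + _); apply: eq_bigr => j _;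
    rewrite ?(unsplitK (inl j)) ?(unsplitK (inr j)).
- move=> r _ [n [a [b [H ->]]]]; exists n, (fun i => r * a i), b; split.
    by move=> i; have [] := H i; split => //; apply: IM.
  by rewrite mulr_sumr; apply: eq_bigr => i _; rewrite mulrA.
Qed.

Lemma is_ideal_setI I J : is_ideal I -> is_ideal J -> is_ideal (I `&` J).
Proof.
case=> I0 ID IM [J0 JD JM]; split => // [x y [Ix Jx] [Iy Jy] | r x [Ix Jx]].
  by split; [apply: ID | apply: JD].
by split; [apply: IM | apply: JM].
Qed.

Definition principal_ideal a : set R := fun x => exists c, x = c * a.

Lemma is_ideal_principal a : is_ideal (principal_ideal a).
Proof.
split; first by exists 0; rewrite mul0r.
- by move=> _ _ [c ->] [d ->]; exists (c + d); rewrite mulrDl.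
- by move=> r _ [c ->]; exists (r * c); rewrite mulrA.
Qed.

Definition ideal_span (s : seq R) : set R :=
  fun x => exists c : 'I_(size s) -> R, x = \sum_(i < size s) c i * s`_i.

Lemma is_ideal_span s : is_ideal (ideal_span s).
Proof.
split.
- by exists (fun=> 0); rewrite big1 // => i _; rewrite mul0r.
- move=> _ _ [c ->] [d ->]; exists (fun i => c i + d i).
  by rewrite -big_split; apply: eq_bigr => i _; rewrite mulrDl.
- move=> r _ [c ->]; exists (fun i => r * c i).
  by rewrite mulr_sumr; apply: eq_bigr => i _; rewrite mulrA.
Qed.

Lemma fin_gen_span s : fin_gen_ideal (ideal_span s).
Proof. by exists s. Qed.

Lemma mem_ideal_span s x : x \in s -> ideal_span s x.
Proof.
move=> xs; have xi : (index x s < size s)%N by rewrite index_mem.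
exists (fun j => (j == Ordinal xi)%:R).
rewrite (bigD1 (Ordinal xi)) //= eqxx mul1r nth_index // big1 ?addr0 //.
by move=> j /negbTE ->; rewrite mul0r.
Qed.

Lemma ideal_span_sub I s :
  is_ideal I -> (forall x, x \in s -> I x) -> ideal_span s `<=` I.
Proof.
move=> HI sI _ [c ->]; apply: ideal_sum => // i.
by case: HI => _ _; apply; apply: sI; apply: mem_nth.
Qed.

(* Maximality in the form M + R r = R for every r outside M. *)
Definition maximal_ideal M :=
  [/\ is_ideal M, ~ M 1 & forall r, ~ M r -> exists s m, M m /\ 1 = m + s * r].

Lemma maximal_ideal_prime M a b : maximal_ideal M -> ~ M a -> ~ M b -> ~ M (a * b).
Proof.
case=> [[_ MD MM] _ Mmax] Ma Mb Mab; apply: Mb.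
have [s [m [Mm E]]] := Mmax a Ma.
have -> : b = m * b + s * (a * b) by rewrite mulrA -mulrDl -E mul1r.
by apply: MD; [rewrite mulrC|]; apply: MM.
Qed.

Lemma maximal_ideal_sub_eq M M' :
  maximal_ideal M -> maximal_ideal M' -> M `<=` M' -> M' `<=` M.
Proof.
case=> _ _ Mmax [[_ MD' MM'] M'1 _] MsubM' x M'x; apply: contrapT => Mx.
have [s [m [Mm E]]] := Mmax x Mx; apply: M'1; rewrite E.
by apply: MD'; [apply: MsubM' | apply: MM'].
Qed.

Lemma exists_maximal_ideal L :
  is_ideal L -> ~ L 1 -> exists M, maximal_ideal M /\ L `<=` M.
Proof.
move=> HL L1.
(* [set0] is admitted so that the empty chain has an upper bound. *)
pose P A := A = set0 \/ [/\ is_ideal A, ~ A 1 & L `<=` A].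
have [A [PA Amax]] : exists A, P A /\ forall B, A `<` B -> ~ P B.
  apply: Zorn_bigcup => F FP Fchain.
  have inhabited_ideal Y y : F Y -> Y y -> [/\ is_ideal Y, ~ Y 1 & L `<=` Y].
    by move=> /FP [-> //|].
  have [[X FX [x Xx]] | Fempty] := pselect (exists2 X, F X & X !=set0); last first.
    left; apply/seteqP; split => x // [X FX Xx].
    by apply: Fempty; exists X => //; exists x.
  have [[X0 _ _] _ LX] := inhabited_ideal _ _ FX Xx.
  right; split; first split.
  - by exists X.
  - move=> y z [Y FY Yy] [Z FZ Zz].
    have [YZ|ZY] := Fchain _ _ FY FZ.
      have [[_ ZD _] _ _] := inhabited_ideal _ _ FZ Zz.
      by exists Z => //; apply: ZD => //; apply: YZ.
    have [[_ YD _] _ _] := inhabited_ideal _ _ FY Yy.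
    by exists Y => //; apply: YD => //; apply: ZY.
  - move=> r y [Y FY Yy]; have [[_ _ YM] _ _] := inhabited_ideal _ _ FY Yy.
    by exists Y => //; apply: YM.
  - by move=> [Y FY Y1]; have [_ + _] := inhabited_ideal _ _ FY Y1.
  - by move=> y Ly; exists X => //; apply: LX.
have [HA A1 LA] : [/\ is_ideal A, ~ A 1 & L `<=` A].
  case: PA => [A0|//]; exfalso; apply: (Amax L); last by right; split.
  by rewrite A0; split => // /(_ 0); case: HL => L0 _ _ /(_ L0).
exists A; split => //; split => // r Ar.
pose B x := exists s m, A m /\ x = m + s * r.
have [A0 AD AM] := HA.
have HB : is_ideal B.
  split; first by exists 0, 0; rewrite mul0r addr0.
  - move=> _ _ [s [m [Am ->]]] [s' [m' [Am' ->]]].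
    by exists (s + s'), (m + m'); rewrite mulrDl addrACA; split => //; apply: AD.
  - move=> t _ [s [m [Am ->]]]; exists (t * s), (t * m).
    by rewrite mulrDr mulrA; split => //; apply: AM.
have AB : A `<=` B by move=> x Ax; exists 0, x; rewrite mul0r addr0.
apply: contrapT => B1; apply: (Amax B); last by right; split => // y /LA /AB.
split => // /(_ r) BA; apply: Ar; apply: BA.
by exists 1, 0; rewrite mul1r add0r.
Qed.

Lemma exists_prod_notin_maximal M n (N : 'I_n -> set R) :
  maximal_ideal M -> (forall k, is_ideal (N k)) ->
  (forall k, exists r, N k r /\ ~ M r) -> exists r, ~ M r /\ forall k, N k r.
Proof.
move=> HM HN /fin_all_exists [r Hr]; exists (\prod_k r k); split.
  apply: (big_ind (fun x => ~ M x)) => [|x y|k _]; first by case: HM.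
    exact: maximal_ideal_prime.
  by case: (Hr k).
move=> k; rewrite (bigD1 k) //= mulrC; case: (HN k) => _ _; apply.
by case: (Hr k).
Qed.

Lemma ideal_mul_maximal_cancel J M y r :
  is_ideal J -> maximal_ideal M -> J y -> ~ M r ->
  ideal_mul J M (y * r) -> ideal_mul J M y.
Proof.
move=> HJ [_ _ Mmax] Jy Mr yrJM; have [s [m [Mm E]]] := Mmax r Mr.
have -> : y = y * m + s * (y * r) by rewrite mulrCA -mulrDr -E mulr1.
have [_ JMD JMM] := is_ideal_mul M HJ.
by apply: JMD; [apply: mem_ideal_mul | apply: JMM].
Qed.

Lemma ideal_mul_maximal_avoidance J n (M : 'I_n -> set R) :
  is_ideal J -> (forall k, maximal_ideal (M k)) ->
  (forall k, exists y, J y /\ ~ ideal_mul J (M k) y) ->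
  exists z, J z /\ forall k, ~ ideal_mul J (M k) z.
Proof.
(* Inductive step: add y r with y in J \ J M_n and r in the product of the earlier M_k
   outside M_n; then y r lies in every earlier J M_k but not in J M_n. *)
move=> HJ; have [J0 JD JM] := HJ.
elim: n M => [|n IH] M Mmax JnM; first by exists 0; split => // -[].
pose M' k := M (lift ord_max k).
have [z' [Jz' z'M']] := IH M' (fun k => Mmax _) (fun k => JnM _).
have [z'Mn|z'nMn] := pselect (ideal_mul J (M ord_max) z'); last first.
  by exists z'; split => // k; case: (unliftP ord_max k) => [k'|] ->; [apply: z'M'|].
have [r [rMn rM']] : exists r, ~ M ord_max r /\ forall k, M' k r.
  apply: exists_prod_notin_maximal => [|k|k]; first exact: Mmax.
    by case: (Mmax (lift ord_max k)).
  apply: (@nsubsetP _ (M' k)) => M'Mn; apply: (z'M' k); apply: ideal_mulSr z'Mn.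
  exact: maximal_ideal_sub_eq (Mmax _) (Mmax _) M'Mn.
have [y [Jy yMn]] := JnM ord_max.
exists (z' + y * r); split; first by apply: JD => //; rewrite mulrC; apply: JM.
move=> k; case: (unliftP ord_max k) => [k'|] -> zM.
  apply: (z'M' k'); rewrite -(addrK (y * r) z').
  by apply: idealB; [apply: is_ideal_mul | | apply: mem_ideal_mul].
apply/yMn/(ideal_mul_maximal_cancel HJ (Mmax _) Jy rMn).
rewrite -[y * r](addKr z') addrC; apply: idealB => //.
exact: is_ideal_mul.
Qed.

End Ideals.

Lemma mult_ideal_cancel (R : idomainType) (J M : set R) a :
  is_ideal J -> is_ideal M -> mult_ideal J -> J a -> a != 0 ->
  J `<=` ideal_mul J M -> M 1.
Proof.
(* Writing R a = J A gives J A ⊆ a M, so a ∈ J A ⊆ a M and 1 ∈ M after cancelling a. *)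
move=> [_ _ JM] [M0 MD MM] Jmult Ja a0 JJM.
have RaJ : principal_ideal a `<=` J by move=> _ [c ->]; apply: JM.
have [A [_ RaJA]] := Jmult _ (is_ideal_principal a) RaJ.
pose aM x := exists m, M m /\ x = a * m.
have aM0 : aM 0 by exists 0; rewrite mulr0.
have aMD x y : aM x -> aM y -> aM (x + y).
  move=> [m [Mm ->]] [m' [Mm' ->]]; exists (m + m').
  by rewrite mulrDr; split => //; apply: MD.
have JA_aM j al : J j -> A al -> aM (j * al).
  move=> /JJM [n [u [v [Huv ->]]]] Aal; rewrite mulr_suml; apply: big_ind => // i _.
  have [Ju Mv] := Huv i.
  have /RaJA [c Hc] := mem_ideal_mul Ju Aal.
  by exists (c * v i); split; [apply: MM | rewrite mulrAC Hc mulrAC mulrC].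
have /RaJA [n [u [v [Huv Ea]]]] : principal_ideal a a by exists 1; rewrite mul1r.
have [m [Mm Eam]] : aM a.
  by rewrite Ea; apply: big_ind => // i _; have [] := Huv i; apply: JA_aM.
by move: Eam; rewrite -{1}(mulr1 a) => /(mulfI a0) ->.
Qed.

Lemma mult_ideal_has_avoidance (R : idomainType) (J : set R) :
  is_ideal J -> mult_ideal J -> has_avoidance J.
Proof.
move=> HJ Jmult n Is HIs cover; apply: contrapT => nav.
have /fin_all_exists [y Hy] k : exists y, J y /\ ~ Is k y.
  by apply: nsubsetP => JIs; apply: nav; exists k.
have /fin_all_exists [M HM] k :
    exists M, maximal_ideal M /\ Is k `&` J `<=` ideal_mul J M.
  have IsJ_J : Is k `&` J `<=` J by move=> x [].
  have [L [HL IsJ_JL]] := Jmult _ (is_ideal_setI (HIs k) HJ) IsJ_J.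
  have L1 : ~ L 1.
    move=> L1; have [Jy yIs] := Hy k; apply: yIs.
    by have /IsJ_JL [] : ideal_mul J L (y k) by rewrite -[y k]mulr1; apply: mem_ideal_mul.
  have [M [HM LM]] := exists_maximal_ideal HL L1.
  by exists M; split => // x /IsJ_JL; apply: ideal_mulSr.
have JnJM k : exists x, J x /\ ~ ideal_mul J (M k) x.
  apply: nsubsetP => JJM; have [[HMk Mk1 _] _] := HM k; apply: Mk1.
  have [Jy yIs] := Hy k.
  apply: (mult_ideal_cancel HJ HMk Jmult Jy _ JJM); apply/eqP => y0.
  by apply: yIs; rewrite y0; case: (HIs k).
have [z [Jz zJM]] := ideal_mul_maximal_avoidance HJ (fun k => (HM k).1) JnJM.
have [k Iskz] := cover z Jz.
by apply: (zJM k); apply: (HM k).2.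
Qed.

Theorem corollary3p14 (R : idomainType) :
  (forall I : R -> Prop, is_ideal I -> fin_gen_ideal I -> mult_ideal I) ->
  avoidance_ring R.
Proof.
move=> fg_mult I HI n Is HIs cover; apply: contrapT => nav.
have /fin_all_exists [y Hy] k : exists y, I y /\ ~ Is k y.
  by apply: nsubsetP => IIs; apply: nav; exists k.
pose J := ideal_span (codom y).
have JI : J `<=` I.
  by apply: ideal_span_sub => // _ /codomP [k ->]; apply: (Hy k).1.
have HJ : is_ideal J := is_ideal_span _.
have Jmult : mult_ideal J := fg_mult J HJ (fin_gen_span _).
have JIs_cover x : J x -> exists k, Is k x by move/JI; apply: cover.
have [k JIs] := mult_ideal_has_avoidance HJ Jmult HIs JIs_cover.
by apply: (Hy k).2; apply/JIs/mem_ideal_span/codom_f.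
Qed.
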